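(* Assume $\beta>1$ and $0<\omega_i^{\min}\le\omega_i^k\le\omega_i^{\max}<\infty$ ($i\le N-1$), $0<\nu_i^{\min}\le\nu_i^k\le\nu_i^{\max}<\infty$ ($i\le N-2$) for all $k\ge0$. Then the iterates of the 2-splitting proximal point ADMM are bounded: there exist constants $\mathcal{W}_i^{\max},\mathcal{V}_i^{\max},\lambda^{\max}>0$ such that $\|W_i^k\|_F\le\mathcal{W}_i^{\max}$, $\|V_i^k\|_F\le\mathcal{V}_i^{\max}$ ($i=1,\dots,N$) and $\|\Lambda^k\|_F\le\lambda^{\max}$ for all $k\ge0$.
   Context: Data $X\in\mathbb{R}^{d\times n}$, $Y\in\mathbb{R}^{q\times n}$, integer $N\ge3$, parameters $\lambda,\mu>0$, $\beta>0$. Activations $\sigma_i:\mathbb{R}\to\mathbb{R}$ ($i\le N-1$) real analytic with $|\sigma_i|\le\psi_0,|\sigma_i'|\le\psi_1,|\sigma_i''|\le\psi_2$ on $\mathbb{R}$, applied entrywise to matrices. $\|\cdot\|_F$ Frobenius norm, $\langle A,B\rangle=\mathrm{tr}(AB^T)$. $V_0:=X$ always. Variables $W_i\in\mathbb{R}^{d\times d}$ ($i\le N-1$), $W_N\in\mathbb{R}^{q\times d}$, $V_i\in\mathbb{R}^{d\times n}$ ($1\le i\le N-1$), $V_N,\Lambda\in\mathbb{R}^{q\times n}$. Augmented Lagrangian: $\mathcal{L}_\beta^{2s}(\{W_i\},\{V_i\},\Lambda)=\tfrac12\|V_N-Y\|_F^2+\tfrac\lambda2\sum_{i=1}^N\|W_i\|_F^2+\tfrac\mu2\sum_{i=1}^{N-1}\|V_{i-1}+\sigma_i(W_iV_{i-1})-V_i\|_F^2+\langle\Lambda,W_NV_{N-1}-V_N\rangle+\tfrac\beta2\|W_NV_{N-1}-V_N\|_F^2$.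 2-splitting proximal point ADMM: given arbitrary $W_i^0$, set $V_i^0=V_{i-1}^0+\sigma_i(W_i^0V_{i-1}^0)$ ($i\le N-1$), $V_N^0=W_N^0V_{N-1}^0$, $\Lambda^0=O$, and positive parameters $\omega_i^{k}$ ($i\le N-1$), $\nu_i^{k}$ ($i\le N-2$). For $k\ge1$: (a) $W_N^k=\arg\min_{W_N}\{\tfrac\lambda2\|W_N\|_F^2+\tfrac\beta2\|W_NV_{N-1}^{k-1}-V_N^{k-1}+\Lambda^{k-1}/\beta\|_F^2\}$; (b) for $i=N-1,\dots,1$: $W_i^k$ is a (fixed) minimizer of $\tfrac\lambda2\|W_i\|_F^2+\tfrac\mu2\|V_{i-1}^{k-1}+\sigma_i(W_iV_{i-1}^{k-1})-V_i^{k-1}\|_F^2+\tfrac{\omega_i^{k-1}}2\|W_i-W_i^{k-1}\|_F^2$; (c) for $i=1,\dots,N-2$: $V_i^k$ is a (fixed) minimizer of $\tfrac\mu2\|V_{i-1}^k+\sigma_i(W_i^kV_{i-1}^k)-V_i\|_F^2+\tfrac\mu2\|V_i+\sigma_{i+1}(W_{i+1}^kV_i)-V_{i+1}^{k-1}\|_F^2+\tfrac{\nu_i^{k-1}}2\|V_i-V_i^{k-1}\|_F^2$; (d) $V_{N-1}^k=\arg\min\{\tfrac\mu2\|V_{N-2}^k+\sigma_{N-1}(W_{N-1}^kV_{N-2}^k)-V_{N-1}\|_F^2+\tfrac\beta2\|W_N^kV_{N-1}-V_N^{k-1}+\Lambda^{k-1}/\beta\|_F^2\}$; (e) $V_N^k=\frac{1}{1+\beta}(Y+\beta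 W_N^kV_{N-1}^k+\Lambda^{k-1})$; (f) $\Lambda^k=\Lambda^{k-1}+\beta(W_N^kV_{N-1}^k-V_N^k)$. *)

From HB Require Import structures.
From mathcomp Require Import all_boot all_order all_algebra.
From mathcomp Require Import all_classical all_reals all_analysis.
Set Implicit Arguments. Unset Strict Implicit. Unset Printing Implicit Defensive.
Import Order.TTheory GRing.Theory Num.Theory.
Import numFieldNormedType.Exports.
Local Open Scope classical_set_scope.
Local Open Scope ring_scope.

Section Defs.
Variable R : realType.

Definition frob_inner (m p : nat) (A B : 'M[R]_(m, p)) : R :=
  \tr (A *m B^T).

Definition fnorm (m p : nat) (A : 'M[R]_(m, p)) : R :=
  Num.sqrt (\sum_(i < m) \sum_(j < p) A i j ^+ 2).

Definition act (m p : nat) (s : R -> R) (A : 'M[R]_(m, p)) : 'M[R]_(m, p) :=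
  map_mx s A.

Definition is_minimizer (T : Type) (f : T -> R) (x : T) : Prop :=
  forall y, f x <= f y.

Definition real_analytic (f : R -> R) : Prop :=
  forall x0 : R, exists2 r : R, 0 < r &
    exists a : nat -> R, forall x : R, `|x - x0| < r ->
      (fun m : nat => \sum_(k < m) a k * (x - x0) ^+ k) @ \oo --> f x.

End Defs.

From mathcomp Require Import all_boot all_order all_algebra.
From mathcomp Require Import all_classical all_reals all_analysis.
From mathcomp Require Import ring lra zify.
Import Order.TTheory GRing.Theory Num.Theory.
Set Implicit Arguments. Unset Strict Implicit. Unset Printing Implicit Defensive.
Local Open Scope ring_scope.

(* The augmented Lagrangian is a Lyapunov function of the iteration.  The
   updates of W_N, of each W_i and of each V_i are exact block minimizations
   (the proximal terms only help), so none of them increases it.  The closed-form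
   V_N-update forces Lambda = V_N - Y, after which the V_N/Lambda step shrinks
   W_N V_{N-1} - V_N by the factor 1/(1+beta) and cannot increase it either.
   Once Lambda = V_N - Y, and because beta > 1, the augmented Lagrangian is a sum
   of nonnegative squares, each bounded by its value at k = 1.  This bounds W_i,
   W_N and the layer residuals, then V_i layer by layer (only |sigma_i| <= psi0
   is needed), then V_N and Lambda; the iterate k = 0 goes into the constants. *)

Section SumNat.
Variable R : numDomainType.
Implicit Types F G : nat -> R.

Lemma ler_sum_nat_term F a b j :
  (forall i, 0 <= F i) -> (a <= j < b)%N -> F j <= \sum_(a <= i < b) F i.
Proof.
move=> F0 hj; rewrite (bigD1_seq j) ?mem_index_iota ?iota_uniq //= lerDl.
exact: sumr_ge0.
Qed.

Lemma ler_sum_nat_update2 F G a b t :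
  (a <= t)%N -> (t.+1 < b)%N ->
  (forall j, j != t -> j != t.+1 -> F j = G j) ->
  F t + F t.+1 <= G t + G t.+1 ->
  \sum_(a <= j < b) F j <= \sum_(a <= j < b) G j.
Proof.
move=> a_t t_b FG le_t.
have split (H : nat -> R) : \sum_(a <= j < b) H j =
    \sum_(a <= j < t) H j + (H t + H t.+1) + \sum_(t.+2 <= j < b) H j.
  rewrite (@big_cat_nat _ _ _ t) //; last by lia.
  rewrite (@big_cat_nat _ _ _ t.+2 t) //; last by lia.
  by rewrite (@big_cat_nat _ _ _ t.+1 t) // !big_nat1 /= !addrA.
have pre : \sum_(a <= j < t) F j = \sum_(a <= j < t) G j.
  by apply: eq_big_nat => j /andP[_ ?]; apply: FG; lia.
have post : \sum_(t.+2 <= j < b) F j = \sum_(t.+2 <= j < b) G j.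
  by apply: eq_big_nat => j /andP[? _]; apply: FG; lia.
by rewrite !split pre post lerD2r lerD2l.
Qed.

End SumNat.

Section FrobeniusNorm.
Variable R : realType.
Implicit Types (m p : nat) (c : R).

Lemma fnorm_ge0 m p (A : 'M[R]_(m, p)) : 0 <= fnorm A.
Proof. exact: sqrtr_ge0. Qed.

Lemma fnorm_sqrE m p (A : 'M[R]_(m, p)) :
  fnorm A ^+ 2 = \sum_(i < m) \sum_(j < p) A i j ^+ 2.
Proof.
rewrite /fnorm sqr_sqrtr //.
by apply: sumr_ge0 => i _; apply: sumr_ge0 => j _; exact: sqr_ge0.
Qed.

Lemma fnorm0 m p : fnorm (0 : 'M[R]_(m, p)) = 0.
Proof.
by rewrite /fnorm big1 ?sqrtr0 // => i _; rewrite big1 // => j _; rewrite mxE expr0n.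
Qed.

Lemma mulr_sum2 m p c (F : 'I_m -> 'I_p -> R) :
  c * \sum_i \sum_j F i j = \sum_i \sum_j c * F i j.
Proof. by rewrite mulr_sumr; apply: eq_bigr => i _; rewrite mulr_sumr. Qed.

Lemma sum2D m p (F G : 'I_m -> 'I_p -> R) :
  \sum_i \sum_j F i j + \sum_i \sum_j G i j = \sum_i \sum_j (F i j + G i j).
Proof. by rewrite -big_split; apply: eq_bigr => i _; rewrite -big_split. Qed.

Lemma ler_sum2 m p (F G : 'I_m -> 'I_p -> R) :
  (forall i j, F i j <= G i j) -> \sum_i \sum_j F i j <= \sum_i \sum_j G i j.
Proof. by move=> FG; apply: ler_sum => i _; apply: ler_sum => j _. Qed.

Lemma fnormZ_sqr m p c (A : 'M[R]_(m, p)) : fnorm (c *: A) ^+ 2 = c ^+ 2 * fnorm A ^+ 2.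
Proof.
rewrite !fnorm_sqrE mulr_sum2.
by apply: eq_bigr => i _; apply: eq_bigr => j _; rewrite mxE exprMn.
Qed.

Lemma fnorm_sqr_sub_le m p (A B : 'M[R]_(m, p)) :
  fnorm (A - B) ^+ 2 <= 2 * (fnorm A ^+ 2 + fnorm B ^+ 2).
Proof.
rewrite !fnorm_sqrE sum2D mulr_sum2; apply: ler_sum2 => i j; rewrite !mxE.
have := sqr_ge0 (A i j + B i j); nra.
Qed.

Lemma fnorm_sqr_addB_le m p (A B C : 'M[R]_(m, p)) :
  fnorm (A + B - C) ^+ 2 <= 3 * (fnorm A ^+ 2 + fnorm B ^+ 2 + fnorm C ^+ 2).
Proof.
rewrite !fnorm_sqrE !sum2D mulr_sum2; apply: ler_sum2 => i j; rewrite !mxE.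
have := sqr_ge0 (A i j - B i j); have := sqr_ge0 (A i j + C i j).
have := sqr_ge0 (B i j + C i j); nra.
Qed.

Lemma fnorm_sqr_act_le m p (s : R -> R) c (A : 'M[R]_(m, p)) :
  (forall x, `|s x| <= c) -> fnorm (act s A) ^+ 2 <= c ^+ 2 *+ (m * p).
Proof.
move=> s_le; have -> : c ^+ 2 *+ (m * p) = \sum_(i < m) \sum_(j < p) c ^+ 2.
  by rewrite !sumr_const !card_ord -mulrnA mulnC.
rewrite fnorm_sqrE; apply: ler_sum2 => i j; rewrite mxE.
by have := s_le (A i j); rewrite ler_norml => /andP[]; nra.
Qed.

Lemma minimizer_prox_le m p (g : 'M[R]_(m, p) -> R) c (x x0 : 'M[R]_(m, p)) :
  0 <= c -> is_minimizer (fun y => g y + c / 2 * fnorm (y - x0) ^+ 2) x ->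
  g x <= g x0.
Proof.
move=> c0 /(_ x0); rewrite subrr fnorm0 expr0n /= mulr0 addr0.
apply: le_trans; rewrite lerDl; apply: mulr_ge0; last exact: sqr_ge0.
by apply: divr_ge0.
Qed.

Definition seq_bound m p (A : nat -> 'M[R]_(m, p)) (B : R) := 1 + `|B| + fnorm (A 0%N).

Lemma seq_bound_gt0 m p (A : nat -> 'M[R]_(m, p)) B : 0 < seq_bound A B.
Proof. by rewrite /seq_bound; have := fnorm_ge0 (A 0%N); have := normr_ge0 B; lra. Qed.

Lemma fnorm_le_seq_bound m p (A : nat -> 'M[R]_(m, p)) B :
  (forall k, (0 < k)%N -> fnorm (A k) ^+ 2 <= B) -> forall k, fnorm (A k) <= seq_bound A B.
Proof.
rewrite /seq_bound => A_le [|k]; have := normr_ge0 B; have := fnorm_ge0 (A 0%N); first lra.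
have := ler_norm B; have := A_le k.+1 isT; have := fnorm_ge0 (A k.+1); nra.
Qed.

End FrobeniusNorm.

Section MultiplierUpdate.
Variables (R : realType) (q n : nat) (Y : 'M[R]_(q, n)) (beta : R).
Implicit Types P VN L : 'M[R]_(q, n).

Lemma multiplier_update_eq P L VN' L' : 1 + beta != 0 ->
  VN' = (1 + beta)^-1 *: (Y + beta *: P + L) -> L' = L + beta *: (P - VN') ->
  L' = VN' - Y.
Proof.
move=> ? -> ->; apply/matrixP => i j; rewrite !mxE.
by field.
Qed.

Lemma penalty_update_contract P VN L VN' : 1 + beta != 0 ->
  L = VN - Y -> VN' = (1 + beta)^-1 *: (Y + beta *: P + L) ->
  P - VN' = (1 + beta)^-1 *: (P - VN).
Proof.
move=> ? -> ->; apply/matrixP => i j; rewrite !mxE.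
by field.
Qed.

(* The factor [beta - 1] is why [beta > 1] is needed. *)
Lemma penalty_tailE P VN L : beta != 0 -> L = VN - Y ->
  1 / 2 * fnorm (VN - Y) ^+ 2 + beta / 2 * fnorm (P - VN + beta^-1 *: L) ^+ 2
    - (2 * beta)^-1 * fnorm L ^+ 2
  = 1 / 2 * fnorm (P - Y) ^+ 2 + (beta - 1) / 2 * fnorm (P - VN) ^+ 2.
Proof.
move=> ? ->; rewrite -mulNr !fnorm_sqrE !mulr_sum2 !sum2D.
apply: eq_bigr => i _; apply: eq_bigr => j _; rewrite !mxE.
by field.
Qed.

End MultiplierUpdate.

Section AugmentedLagrangian.
Variables (R : realType) (d q n N : nat) (Y : 'M[R]_(q, n)) (lam mu beta : R).
Variable sig : nat -> R -> R.
Implicit Types (W : nat -> 'M[R]_(d, d)) (V : nat -> 'M[R]_(d, n)).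
Implicit Types (WN : 'M[R]_(q, d)) (VN L : 'M[R]_(q, n)).

Definition layer_res W V j := V j.-1 + act (sig j) (W j *m V j.-1) - V j.

Definition layer_cost W V j :=
  lam / 2 * fnorm (W j) ^+ 2 + mu / 2 * fnorm (layer_res W V j) ^+ 2.

(* [<L, P - VN> + beta/2 |P - VN|^2] is written as the completed square
   [beta/2 |P - VN + L/beta|^2 - |L|^2/(2 beta)], with [P = WN V_{N-1}]. *)
Definition auglag W WN V VN L :=
  1 / 2 * fnorm (VN - Y) ^+ 2 + \sum_(1 <= j < N) layer_cost W V j
  + lam / 2 * fnorm WN ^+ 2
  + beta / 2 * fnorm (WN *m V N.-1 - VN + beta^-1 *: L) ^+ 2
  - (2 * beta)^-1 * fnorm L ^+ 2.

Lemma layer_cost_ge0 W V j : 0 <= lam -> 0 <= mu -> 0 <= layer_cost W V j.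
Proof. by move=> ? ?; apply: addr_ge0; apply: mulr_ge0; rewrite ?sqr_ge0 ?divr_ge0. Qed.

Lemma auglag_ext W WN V V' VN L : (0 < N)%N -> (forall j, (j < N)%N -> V' j = V j) ->
  auglag W WN V' VN L = auglag W WN V VN L.
Proof.
move=> N_gt0 VV'; rewrite /auglag VV' ?prednK ?leq_pred //.
congr (_ + _ + _ + _ - _).
by apply: eq_big_nat => j /andP[_ ?]; rewrite /layer_cost /layer_res !VV' //; lia.
Qed.

Lemma auglag_WN_le W WN WN' V VN L :
  is_minimizer (fun Wn : 'M[R]_(q, d) => lam / 2 * fnorm Wn ^+ 2
      + beta / 2 * fnorm (Wn *m V N.-1 - VN + beta^-1 *: L) ^+ 2) WN' ->
  auglag W WN' V VN L <= auglag W WN V VN L.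
Proof. by move/(_ WN); rewrite /auglag; lra. Qed.

Lemma auglag_W_le W W' WN V VN L (om : nat -> R) :
  (forall i, (1 <= i <= N.-1)%N -> 0 <= om i) ->
  (forall i, (1 <= i <= N.-1)%N ->
     is_minimizer (fun Wi : 'M[R]_(d, d) => lam / 2 * fnorm Wi ^+ 2
         + mu / 2 * fnorm (V i.-1 + act (sig i) (Wi *m V i.-1) - V i) ^+ 2
         + om i / 2 * fnorm (Wi - W i) ^+ 2) (W' i)) ->
  auglag W' WN V VN L <= auglag W WN V VN L.
Proof.
move=> om_ge0 W'_min.
suff : \sum_(1 <= j < N) layer_cost W' V j <= \sum_(1 <= j < N) layer_cost W V j.
  by rewrite /auglag; lra.
apply: ler_sum_nat => j /andP[? ?].
by apply: (minimizer_prox_le (om_ge0 j _) (W'_min j _)); lia.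
Qed.

Lemma auglag_V_update W WN V V' VN L t c :
  (1 <= t)%N -> (t.+1 < N)%N -> 0 <= c -> (forall j, j != t -> V' j = V j) ->
  is_minimizer (fun Vi : 'M[R]_(d, n) =>
      mu / 2 * fnorm (V t.-1 + act (sig t) (W t *m V t.-1) - Vi) ^+ 2
      + mu / 2 * fnorm (Vi + act (sig t.+1) (W t.+1 *m Vi) - V t.+1) ^+ 2
      + c / 2 * fnorm (Vi - V t) ^+ 2) (V' t) ->
  auglag W WN V' VN L <= auglag W WN V VN L.
Proof.
move=> t_ge1 t_lt c_ge0 VV' /(minimizer_prox_le c_ge0) V'_le.
suff : \sum_(1 <= j < N) layer_cost W V' j <= \sum_(1 <= j < N) layer_cost W V j.
  by rewrite /auglag VV'; [lra | lia].
apply: (ler_sum_nat_update2 t_ge1 t_lt) => [j ? ?|].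
  by rewrite /layer_cost /layer_res !VV' //; lia.
have V'_prev : V' t.-1 = V t.-1 by apply: VV'; lia.
have V'_next : V' t.+1 = V t.+1 by apply: VV'; lia.
by move: V'_le; rewrite /layer_cost /layer_res /= V'_prev V'_next; lra.
Qed.

Lemma auglag_V_update_last W WN V V' VN L :
  (2 <= N)%N -> (forall j, j != N.-1 -> V' j = V j) ->
  is_minimizer (fun Vi : 'M[R]_(d, n) =>
      mu / 2 * fnorm (V N.-2 + act (sig N.-1) (W N.-1 *m V N.-2) - Vi) ^+ 2
      + beta / 2 * fnorm (WN *m Vi - VN + beta^-1 *: L) ^+ 2) (V' N.-1) ->
  auglag W WN V' VN L <= auglag W WN V VN L.
Proof.
move=> N_ge2 VV' /(_ (V N.-1)).
have sumN (F : nat -> R) :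
    \sum_(1 <= j < N) F j = \sum_(1 <= j < N.-1) F j + F N.-1.
  by rewrite -big_nat_recr ?prednK //; lia.
have pre : \sum_(1 <= j < N.-1) layer_cost W V' j = \sum_(1 <= j < N.-1) layer_cost W V j.
  by apply: eq_big_nat => j ?; rewrite /layer_cost /layer_res !VV' //; lia.
have V'_prev : V' N.-2 = V N.-2 by apply: VV'; lia.
by rewrite /auglag !sumN pre /layer_cost /layer_res V'_prev; lra.
Qed.

Lemma auglag_V_le W WN V V' VN L (nu : nat -> R) :
  (2 <= N)%N -> V' 0%N = V 0%N ->
  (forall i, (1 <= i <= N.-2)%N -> 0 <= nu i) ->
  (forall i, (1 <= i <= N.-2)%N ->
     is_minimizer (fun Vi : 'M[R]_(d, n) =>
         mu / 2 * fnorm (V' i.-1 + act (sig i) (W i *m V' i.-1) - Vi) ^+ 2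
         + mu / 2 * fnorm (Vi + act (sig i.+1) (W i.+1 *m Vi) - V i.+1) ^+ 2
         + nu i / 2 * fnorm (Vi - V i) ^+ 2) (V' i)) ->
  is_minimizer (fun Vi : 'M[R]_(d, n) =>
      mu / 2 * fnorm (V' N.-2 + act (sig N.-1) (W N.-1 *m V' N.-2) - Vi) ^+ 2
      + beta / 2 * fnorm (WN *m Vi - VN + beta^-1 *: L) ^+ 2) (V' N.-1) ->
  auglag W WN V' VN L <= auglag W WN V VN L.
Proof.
move=> N_ge2 V'0 nu_ge0 V'_min V'_min_last.
have N_gt0 : (0 < N)%N := ltnW N_ge2.
(* Gauss-Seidel sweep: [U t] carries the new iterate on the layers [<= t]. *)
pose U t j := if (j <= t)%N then V' j else V j.
have UV' t j : (j <= t)%N -> U t j = V' j by rewrite /U => ->.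
have UV t j : (t < j)%N -> U t j = V j by move=> tj; rewrite /U leqNgt tj.
have U_eq t j : j != t.+1 -> U t.+1 j = U t j.
  by move=> /negbTE jt; rewrite /U [in LHS]leq_eqVlt jt ltnS.
have sweep t : (t <= N.-2)%N -> auglag W WN (U t) VN L <= auglag W WN V VN L.
  elim: t => [_ | t IH t_lt].
    by rewrite (auglag_ext _ _ _ _ (V := V) N_gt0) // => -[|j] _; rewrite /U // V'0.
  apply: le_trans (IH (ltnW t_lt)).
  have t_in : (1 <= t.+1 <= N.-2)%N by lia.
  have t_lt' : (t.+2 < N)%N by lia.
  apply: (auglag_V_update _ _ _ (isT : 0 < t.+1)%N t_lt' (nu_ge0 _ t_in) (U_eq t)).
  rewrite /= (UV' t t) // (UV t t.+1) // (UV t t.+2) // (UV' t.+1 t.+1) //.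
  by have /= := V'_min _ t_in.
rewrite (auglag_ext _ _ _ _ (V := U N.-1) N_gt0) => [|j ?]; last by rewrite UV' //; lia.
apply: le_trans (sweep _ (leqnn _)).
have U_last j : j != N.-1 -> U N.-1 j = U N.-2 j.
  by have := U_eq N.-2 j; rewrite prednK //; lia.
apply: auglag_V_update_last N_ge2 U_last _.
by rewrite (UV' N.-2 N.-2) // (UV' N.-1 N.-1).
Qed.

Lemma auglag_VN_le W WN V VN L VN' L' : 1 < beta ->
  L = VN - Y ->
  VN' = (1 + beta)^-1 *: (Y + beta *: (WN *m V N.-1) + L) ->
  L' = L + beta *: (WN *m V N.-1 - VN') ->
  auglag W WN V VN' L' <= auglag W WN V VN L.
Proof.
move=> beta_gt1 eL eVN' eL'; set P := WN *m V N.-1.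
have beta_neq0 : beta != 0 by apply: lt0r_neq0; lra.
have beta1_neq0 : 1 + beta != 0 by apply: lt0r_neq0; lra.
have eL'' := multiplier_update_eq beta1_neq0 eVN' eL'.
have := penalty_tailE P beta_neq0 eL; have := penalty_tailE P beta_neq0 eL''.
have : fnorm (P - VN') ^+ 2 <= fnorm (P - VN) ^+ 2.
  rewrite (penalty_update_contract beta1_neq0 eL eVN') fnormZ_sqr ler_piMl ?sqr_ge0 //.
  by rewrite exprn_ile1 ?invr_ge0 ?invf_le1; lra.
rewrite /auglag; nra.
Qed.

Lemma auglag_multiplierE W WN V VN L : beta != 0 -> L = VN - Y ->
  auglag W WN V VN L = \sum_(1 <= j < N) layer_cost W V j + lam / 2 * fnorm WN ^+ 2
    + 1 / 2 * fnorm (WN *m V N.-1 - Y) ^+ 2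
    + (beta - 1) / 2 * fnorm (WN *m V N.-1 - VN) ^+ 2.
Proof.
by move=> beta_neq0 /(penalty_tailE (WN *m V N.-1) beta_neq0); rewrite /auglag; lra.
Qed.

Lemma auglag_ge W WN V VN L : 0 < lam -> 0 < mu -> 1 < beta -> L = VN - Y ->
  let P := WN *m V N.-1 in
  [/\ forall j, (1 <= j < N)%N ->
        lam / 2 * fnorm (W j) ^+ 2 <= auglag W WN V VN L
        /\ mu / 2 * fnorm (layer_res W V j) ^+ 2 <= auglag W WN V VN L,
      lam / 2 * fnorm WN ^+ 2 <= auglag W WN V VN L,
      1 / 2 * fnorm (P - Y) ^+ 2 <= auglag W WN V VN L &
      (beta - 1) / 2 * fnorm (P - VN) ^+ 2 <= auglag W WN V VN L].
Proof.
move=> lam_gt0 mu_gt0 beta_gt1.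
have beta_neq0 : beta != 0 by apply: lt0r_neq0; lra.
move=> /(auglag_multiplierE _ _ _ beta_neq0) -> P.
have halfM_sqr_ge0 c m p (A : 'M[R]_(m, p)) : 0 < c -> 0 <= c / 2 * fnorm A ^+ 2.
  by move=> c0; rewrite mulr_ge0 ?divr_ge0 ?sqr_ge0 ?ltW.
have S0 : 0 <= \sum_(1 <= j < N) layer_cost W V j.
  by apply: sumr_ge0 => j _; rewrite layer_cost_ge0 ?ltW.
have := halfM_sqr_ge0 _ _ _ WN lam_gt0; have := halfM_sqr_ge0 _ _ _ (P - Y) ltr01.
have beta1_gt0 : 0 < beta - 1 by rewrite subr_gt0.
have := halfM_sqr_ge0 _ _ _ (P - VN) beta1_gt0.
split; try lra.
move=> j /(ler_sum_nat_term (fun i => layer_cost_ge0 W V i (ltW lam_gt0) (ltW mu_gt0))).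
have := halfM_sqr_ge0 _ _ _ (W j) lam_gt0; have := halfM_sqr_ge0 _ _ _ (layer_res W V j) mu_gt0.
rewrite /layer_cost; lra.
Qed.

End AugmentedLagrangian.

Section ADMMIterates.
Variables (R : realType) (d q n N : nat) (X : 'M[R]_(d, n)) (Y : 'M[R]_(q, n)).
Variables (lam mu beta psi0 : R) (sig : nat -> R -> R) (om nu : nat -> nat -> R).
Variables (W : nat -> nat -> 'M[R]_(d, d)) (WN : nat -> 'M[R]_(q, d)).
Variables (V : nat -> nat -> 'M[R]_(d, n)) (VN L : nat -> 'M[R]_(q, n)).
Hypotheses (N_ge2 : (2 <= N)%N) (lam_gt0 : 0 < lam) (mu_gt0 : 0 < mu) (beta_gt1 : 1 < beta).
Hypothesis sig_bounded : forall i, (1 <= i <= N.-1)%N -> forall x, `|sig i x| <= psi0.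
Hypothesis om_ge0 : forall k i, (1 <= i <= N.-1)%N -> 0 <= om k i.
Hypothesis nu_ge0 : forall k i, (1 <= i <= N.-2)%N -> 0 <= nu k i.
Hypothesis V0X : forall k, V k 0%N = X.
Hypothesis admm_step : forall k, (1 <= k)%N ->
   [/\
    is_minimizer (fun Wn : 'M[R]_(q, d) =>
        lam / 2 * fnorm Wn ^+ 2
        + beta / 2 * fnorm (Wn *m V k.-1 N.-1 - VN k.-1 + beta^-1 *: L k.-1) ^+ 2)
      (WN k),
    (forall i, (1 <= i <= N.-1)%N ->
      is_minimizer (fun Wi : 'M[R]_(d, d) =>
          lam / 2 * fnorm Wi ^+ 2
          + mu / 2 * fnorm (V k.-1 i.-1 + act (sig i) (Wi *m V k.-1 i.-1) - V k.-1 i) ^+ 2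
          + om k.-1 i / 2 * fnorm (Wi - W k.-1 i) ^+ 2)
        (W k i)),
    (forall i, (1 <= i <= N.-2)%N ->
      is_minimizer (fun Vi : 'M[R]_(d, n) =>
          mu / 2 * fnorm (V k i.-1 + act (sig i) (W k i *m V k i.-1) - Vi) ^+ 2
          + mu / 2 * fnorm (Vi + act (sig i.+1) (W k i.+1 *m Vi) - V k.-1 i.+1) ^+ 2
          + nu k.-1 i / 2 * fnorm (Vi - V k.-1 i) ^+ 2)
        (V k i)),
    is_minimizer (fun Vi : 'M[R]_(d, n) =>
        mu / 2 * fnorm (V k N.-2 + act (sig N.-1) (W k N.-1 *m V k N.-2) - Vi) ^+ 2
        + beta / 2 * fnorm (WN k *m Vi - VN k.-1 + beta^-1 *: L k.-1) ^+ 2)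
      (V k N.-1) &
    (VN k = (1 + beta)^-1 *: (Y + beta *: (WN k *m V k N.-1) + L k.-1) /\
     L k = L k.-1 + beta *: (WN k *m V k N.-1 - VN k))].

Let AL k := auglag N Y lam mu beta sig (W k) (WN k) (V k) (VN k) (L k).

Lemma admm_multiplierE k : (0 < k)%N -> L k = VN k - Y.
Proof.
move=> /admm_step[_ _ _ _ [eVN eL]].
by apply: multiplier_update_eq eVN eL; apply: lt0r_neq0; have := beta_gt1; lra.
Qed.

Lemma admm_auglag_nonincreasing k : (0 < k)%N -> AL k.+1 <= AL k.
Proof.
move=> k_gt0; have [WN_min W_min V_min V_min_last [eVN eL]] := @admm_step k.+1 isT.
apply: le_trans (auglag_VN_le _ _ _ _ beta_gt1 (admm_multiplierE k_gt0) eVN eL) _.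
have V0 : V k.+1 0%N = V k 0%N by rewrite !V0X.
apply: le_trans (auglag_V_le _ _ N_ge2 V0 (nu_ge0 k) V_min V_min_last) _.
apply: le_trans (auglag_W_le _ _ _ _ _ (om_ge0 k) W_min) _.
exact: auglag_WN_le _ _ _ _ WN_min.
Qed.

Lemma admm_auglag_le_first k : (0 < k)%N -> AL k <= AL 1%N.
Proof.
elim: k => // -[_ _ | k IH _]; first exact: lexx.
exact: le_trans (@admm_auglag_nonincreasing k.+1 isT) (IH isT).
Qed.

Lemma admm_halfM_le k a s : (0 < k)%N -> 0 < a -> a / 2 * s <= AL k -> s <= 2 * AL 1%N / a.
Proof.
move=> k_gt0 a_gt0 /le_trans /(_ (admm_auglag_le_first k_gt0)) le_C.
by rewrite ler_pdivlMr //; lra.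
Qed.

Let admm_auglag_ge k (k_gt0 : (0 < k)%N) :=
  auglag_ge N sig (W k) (WN k) (V k) lam_gt0 mu_gt0 beta_gt1 (admm_multiplierE k_gt0).

Lemma admm_V_sqr_le k i : (0 < k)%N -> (i <= N.-1)%N ->
  fnorm (V k i) ^+ 2
    <= iter i (fun b => 3 * (b + psi0 ^+ 2 *+ (d * n) + 2 * AL 1%N / mu)) (fnorm X ^+ 2).
Proof.
move=> k_gt0; have [layer_le _ _ _] := admm_auglag_ge k_gt0.
elim: i => [_ | i IH i_lt]; first by rewrite V0X.
have i_in : (1 <= i.+1 <= N.-1)%N by lia.
have /layer_le[_ /(admm_halfM_le k_gt0 mu_gt0) res_le] : (1 <= i.+1 < N)%N by lia.
have -> : V k i.+1 = V k i + act (sig i.+1) (W k i.+1 *m V k i)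
                     - layer_res sig (W k) (V k) i.+1.
  by rewrite /layer_res /= opprB addrC subrK.
apply: le_trans (fnorm_sqr_addB_le _ _ _) _.
have := fnorm_sqr_act_le (W k i.+1 *m V k i) (sig_bounded i_in).
have := IH (ltnW i_lt); rewrite [iter i.+1 _ _]/=; lra.
Qed.

Lemma admm_iterates_sqr_bounded :
  exists (BW : R) (BV : nat -> R) (BVN BL : R), [/\
    forall i k, (1 <= i <= N.-1)%N -> (0 < k)%N -> fnorm (W k i) ^+ 2 <= BW,
    forall i k, (i <= N.-1)%N -> (0 < k)%N -> fnorm (V k i) ^+ 2 <= BV i,
    forall k, (0 < k)%N -> fnorm (WN k) ^+ 2 <= BW,
    forall k, (0 < k)%N -> fnorm (VN k) ^+ 2 <= BVN &
    forall k, (0 < k)%N -> fnorm (L k) ^+ 2 <= BL].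
Proof.
have beta1_gt0 : 0 < beta - 1 by have := beta_gt1; lra.
exists (2 * AL 1%N / lam),
  (fun i => iter i (fun b => 3 * (b + psi0 ^+ 2 *+ (d * n) + 2 * AL 1%N / mu)) (fnorm X ^+ 2)),
  (3 * (fnorm Y ^+ 2 + 2 * AL 1%N / 1 + 2 * AL 1%N / (beta - 1))),
  (2 * (2 * AL 1%N / 1 + 2 * AL 1%N / (beta - 1))).
split=> [i k i_in k_gt0 | | k k_gt0 | k k_gt0 | k k_gt0];
  try have [layer_le WN_le PY_le PVN_le] := admm_auglag_ge k_gt0.
- have /layer_le[W_le _] : (1 <= i < N)%N by lia.
  exact: admm_halfM_le k_gt0 lam_gt0 W_le.
- by move=> i k i_le k_gt0; apply: admm_V_sqr_le.
- exact: admm_halfM_le k_gt0 lam_gt0 WN_le.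
- have -> : VN k = Y + (WN k *m V k N.-1 - Y) - (WN k *m V k N.-1 - VN k).
    by rewrite [Y + _]addrC subrK opprB addrC subrK.
  apply: le_trans (fnorm_sqr_addB_le _ _ _) _.
  have := admm_halfM_le k_gt0 beta1_gt0 PVN_le.
  have := admm_halfM_le k_gt0 ltr01 PY_le; lra.
- have -> : L k = (WN k *m V k N.-1 - Y) - (WN k *m V k N.-1 - VN k).
    by rewrite (admm_multiplierE k_gt0) [in RHS]opprB [in RHS]addrC [in RHS]addrA subrK.
  apply: le_trans (fnorm_sqr_sub_le _ _) _.
  have := admm_halfM_le k_gt0 beta1_gt0 PVN_le.
  have := admm_halfM_le k_gt0 ltr01 PY_le; lra.
Qed.

End ADMMIterates.

Theorem mainTheorem5 (R : realType) (d q n N : nat)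
  (X : 'M[R]_(d, n)) (Y : 'M[R]_(q, n))
  (lam mu beta psi0 psi1 psi2 : R)
  (sig : nat -> R -> R)
  (om nu : nat -> nat -> R) (om_min om_max nu_min nu_max : nat -> R)
  (W : nat -> nat -> 'M[R]_(d, d)) (WN : nat -> 'M[R]_(q, d))
  (V : nat -> nat -> 'M[R]_(d, n)) (VN : nat -> 'M[R]_(q, n))
  (L : nat -> 'M[R]_(q, n)) :
  (3 <= N)%N ->
  0 < lam -> 0 < mu -> 1 < beta ->
  (forall i, (1 <= i <= N.-1)%N ->
     [/\ real_analytic (sig i),
         forall x, `|sig i x| <= psi0,
         forall x, `|derive1 (sig i) x| <= psi1 &
         forall x, `|derive1n 2 (sig i) x| <= psi2]) ->
  (forall i, (1 <= i <= N.-1)%N ->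
     0 < om_min i /\ forall k, om_min i <= om k i <= om_max i) ->
  (forall i, (1 <= i <= N.-2)%N ->
     0 < nu_min i /\ forall k, nu_min i <= nu k i <= nu_max i) ->
  (forall k, V k 0%N = X) ->
  (forall i, (1 <= i <= N.-1)%N ->
     V 0%N i = V 0%N i.-1 + act (sig i) (W 0%N i *m V 0%N i.-1)) ->
  VN 0%N = WN 0%N *m V 0%N N.-1 ->
  L 0%N = 0 ->
  (forall k, (1 <= k)%N ->
   [/\
    (* (a) *)
    is_minimizer (fun Wn : 'M[R]_(q, d) =>
        lam / 2 * fnorm Wn ^+ 2
        + beta / 2 * fnorm (Wn *m V k.-1 N.-1 - VN k.-1 + beta^-1 *: L k.-1) ^+ 2)
      (WN k),
    (* (b) *)
    (forall i, (1 <= i <= N.-1)%N ->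
      is_minimizer (fun Wi : 'M[R]_(d, d) =>
          lam / 2 * fnorm Wi ^+ 2
          + mu / 2 * fnorm (V k.-1 i.-1 + act (sig i) (Wi *m V k.-1 i.-1) - V k.-1 i) ^+ 2
          + om k.-1 i / 2 * fnorm (Wi - W k.-1 i) ^+ 2)
        (W k i)),
    (* (c) *)
    (forall i, (1 <= i <= N.-2)%N ->
      is_minimizer (fun Vi : 'M[R]_(d, n) =>
          mu / 2 * fnorm (V k i.-1 + act (sig i) (W k i *m V k i.-1) - Vi) ^+ 2
          + mu / 2 * fnorm (Vi + act (sig i.+1) (W k i.+1 *m Vi) - V k.-1 i.+1) ^+ 2
          + nu k.-1 i / 2 * fnorm (Vi - V k.-1 i) ^+ 2)
        (V k i)),
    (* (d) *)
    is_minimizer (fun Vi : 'M[R]_(d, n) =>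
        mu / 2 * fnorm (V k N.-2 + act (sig N.-1) (W k N.-1 *m V k N.-2) - Vi) ^+ 2
        + beta / 2 * fnorm (WN k *m Vi - VN k.-1 + beta^-1 *: L k.-1) ^+ 2)
      (V k N.-1) &
    (* (e) and (f) *)
    (VN k = (1 + beta)^-1 *: (Y + beta *: (WN k *m V k N.-1) + L k.-1) /\
     L k = L k.-1 + beta *: (WN k *m V k N.-1 - VN k))]) ->
  exists (Wmax Vmax : nat -> R) (lmax : R),
    [/\ (forall i, (1 <= i <= N)%N -> 0 < Wmax i /\ 0 < Vmax i),
        0 < lmax &
        forall k : nat,
          [/\ (forall i, (1 <= i <= N.-1)%N ->
                 fnorm (W k i) <= Wmax i /\ fnorm (V k i) <= Vmax i),
              fnorm (WN k) <= Wmax N,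
              fnorm (VN k) <= Vmax N &
              fnorm (L k) <= lmax]].
Proof.
move=> N_ge3 lam_gt0 mu_gt0 beta_gt1 sig_hyp om_hyp nu_hyp V0X _ _ _ admm_step.
have sig_bounded i : (1 <= i <= N.-1)%N -> forall x, `|sig i x| <= psi0 by case/sig_hyp.
have om_ge0 k i : (1 <= i <= N.-1)%N -> 0 <= om k i.
  by case/om_hyp => /ltW om_min_ge0 /(_ k) /andP[om_min_le _]; exact: le_trans om_min_le.
have nu_ge0 k i : (1 <= i <= N.-2)%N -> 0 <= nu k i.
  by case/nu_hyp => /ltW nu_min_ge0 /(_ k) /andP[nu_min_le _]; exact: le_trans nu_min_le.
have [BW [BV [BVN [BL [W_le V_le WN_le VN_le L_le]]]]] :=
  admm_iterates_sqr_bounded (ltnW N_ge3) lam_gt0 mu_gt0 beta_gt1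
    sig_bounded om_ge0 nu_ge0 V0X admm_step.
exists (fun i => seq_bound (W^~ i) BW + seq_bound WN BW),
  (fun i => seq_bound (V^~ i) (BV i) + seq_bound VN BVN), (seq_bound L BL).
split=> [i _ | | k]; first (by split; apply: addr_gt0; exact: seq_bound_gt0);
  first exact: seq_bound_gt0.
split=> [i i_in | | |].
- split; apply: ler_wpDr (ltW (seq_bound_gt0 _ _)) _.
    exact: (fnorm_le_seq_bound (A := W^~ i) (W_le i^~ i_in)).
  by apply: (fnorm_le_seq_bound (A := V^~ i)) => k'; apply: V_le; case/andP: i_in.
- exact: ler_wpDl (ltW (seq_bound_gt0 _ _)) (fnorm_le_seq_bound WN_le k).
- exact: ler_wpDl (ltW (seq_bound_gt0 _ _)) (fnorm_le_seq_bound VN_le k).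
- exact: fnorm_le_seq_bound L_le k.
Qed.
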